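(* Let $F\in SL(d,\mathbb{Z})$, acting on $\mathbb{T}^d$, be partially hyperbolic with invariant splitting $\mathbb{R}^d=S\oplus C\oplus U$. Suppose that for every smooth function $\varphi:\mathbb{T}^d\to\mathbb{R}$ with $\operatorname{PCF}_\gamma\varphi=0$ for every $su$-cycle $\gamma$ of $F$, there exist a function $u:\mathbb{T}^d\to\mathbb{R}$ and a constant $K$ with $\varphi(x)=u(Fx)-u(x)+K$ for all $x$. Then $F$ is Katznelson irreducible, i.e. $C\cap\mathbb{Z}^d=\{0\}$.
   Context: Partial hyperbolicity: for some metric, $\|F|_S\|<1$, $m(F|_U)>1$, $\|F|_S\|<m(F|_C)$, $m(F|_U)>\|F|_C\|$ ($m$ = conorm). The strong stable and unstable leaves of $F$ are $\mathcal{W}^{ss}(x)=x+S$, $\mathcal{W}^{uu}(x)=x+U$ (mod $\mathbb{Z}^d$). Holonomy functionals: for $x^+\in\mathcal{W}^{ss}(x)$, $\operatorname{Hol}_x^{x^+}\varphi=\sum_{n\ge0}(\varphi(F^nx)-\varphi(F^nx^+))$; for $x^-\in\mathcal{W}^{uu}(x)$, $\operatorname{Hol}_x^{x^-}\varphi=-\sum_{n\ge1}(\varphi(F^{-n}x)-\varphi(F^{-n}x^-))$. An $su$-cycle is $\gamma=(x_0,\dots,x_k)$ with $x_k=x_0$ and each $x_j\in\mathcal{W}^{ss}(x_{j-1})\cup\mathcal{W}^{uu}(x_{j-1})$; $\operatorname{PCF}_\gamma\varphi=\sum_{j=1}^k\operatorname{Hol}_{x_{j-1}}^{x_j}\varphi$.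 *)

From HB Require Import structures.
From mathcomp Require Import all_boot all_order all_algebra.
From mathcomp Require Import all_classical all_reals all_analysis.
Set Implicit Arguments. Unset Strict Implicit. Unset Printing Implicit Defensive.
Import Order.TTheory GRing.Theory Num.Theory.
Import numFieldNormedType.Exports.
Local Open Scope classical_set_scope.
Local Open Scope ring_scope.

(* Points of R^d are row vectors 'rV[R]_d; the torus T^d = R^d / Z^d is
   handled through Z^d-periodic functions on R^d.  A matrix F acts on a
   point x (a column vector in the paper) by x |-> x *m F^T. *)

Section Defs.
Variables (R : realType) (d : nat).
Implicit Types (x y v : 'rV[R]_d) (S C U : 'M[R]_d) (F : 'M[int]_d).

Definition Fr F : 'M[R]_d := map_mx (fun z : int => z%:~R) F.

Definition Fpow F (n : nat) x : 'rV[R]_d := x *m ((Fr F)^T ^+ n).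
Definition Finvpow F (n : nat) x : 'rV[R]_d := x *m ((invmx (Fr F))^T ^+ n).

Definition intvec x : Prop :=
  exists k : 'rV[int]_d, x = map_mx (fun z : int => z%:~R) k.

Definition Zperiodic (f : 'rV[R]_d -> R) : Prop :=
  forall x k, intvec k -> f (x + k) = f x.

Fixpoint dderiv (vs : seq 'rV[R]_d) (f : 'rV[R]_d -> R) : 'rV[R]_d -> R :=
  match vs with
  | [::] => f
  | v :: vs' => fun x => 'D_v (dderiv vs' f) x
  end.

Definition smooth (f : 'rV[R]_d -> R) : Prop :=
  forall vs : seq 'rV[R]_d,
    continuous (dderiv vs f) /\ (forall x v, derivable (dderiv vs f) x v).

(* constant Riemannian (inner product) metric given by a positive definite
   symmetric matrix G *)
Definition posdef (G : 'M[R]_d) : Prop :=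
  G^T = G /\ forall v, v != 0 -> 0 < (v *m G *m v^T) 0 0.

Definition gnorm (G : 'M[R]_d) v : R := Num.sqrt ((v *m G *m v^T) 0 0).

Definition unit_sphere (G : 'M[R]_d) S : set 'rV[R]_d :=
  [set v | (v <= S)%MS /\ gnorm G v = 1].

Definition restr_norm (G : 'M[R]_d) F (E : 'M[R]_d) : R :=
  sup [set gnorm G (v *m (Fr F)^T) | v in unit_sphere G E].
Definition restr_conorm (G : 'M[R]_d) F (E : 'M[R]_d) : R :=
  inf [set gnorm G (v *m (Fr F)^T) | v in unit_sphere G E].

(* F-invariant splitting R^d = S (+) C (+) U (subspaces = row spaces) *)
Definition invariant_splitting F S C U : Prop :=
  (S + C + U == 1%:M)%MS /\ mxdirect (S + C + U) /\
  (S *m (Fr F)^T <= S)%MS /\ (C *m (Fr F)^T <= C)%MS /\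
  (U *m (Fr F)^T <= U)%MS.

Definition partially_hyperbolic F S C U : Prop :=
  invariant_splitting F S C U /\
  S != 0 /\ C != 0 /\ U != 0 /\
  exists G : 'M[R]_d, posdef G /\
    restr_norm G F S < 1 /\ 1 < restr_conorm G F U /\
    restr_norm G F S < restr_conorm G F C /\
    restr_conorm G F U > restr_norm G F C.

Definition in_leaf (E : 'M[R]_d) x y : Prop :=
  exists v k, (v <= E)%MS /\ intvec k /\ y = x + v + k.

Definition HolS F (phi : 'rV[R]_d -> R) x xp : R :=
  limn (series (fun n => phi (Fpow F n x) - phi (Fpow F n xp))).
Definition HolU F (phi : 'rV[R]_d -> R) x xm : R :=
  - limn (series (fun n => phi (Finvpow F n.+1 x) - phi (Finvpow F n.+1 xm))).

(* an su-path from x: a list of legs (b, x_j); b = true: x_j is in the strong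
   stable leaf of x_{j-1}; b = false: in the strong unstable leaf *)
Fixpoint su_path S U x (legs : seq (bool * 'rV[R]_d)) : Prop :=
  match legs with
  | [::] => True
  | (b, y) :: l => in_leaf (if b then S else U) x y /\ su_path S U y l
  end.

Definition su_cycle S U x0 (legs : seq (bool * 'rV[R]_d)) : Prop :=
  su_path S U x0 legs /\ intvec (last x0 (map snd legs) - x0).

Fixpoint PCF F (phi : 'rV[R]_d -> R) x (legs : seq (bool * 'rV[R]_d)) : R :=
  match legs with
  | [::] => 0
  | (b, y) :: l => (if b then HolS F phi x y else HolU F phi x y) + PCF F phi y l
  end.

Definition katznelson_irreducible C : Prop :=
  forall k, intvec k -> (k <= C)%MS -> k = 0.

End Defs.

(* Suppose a nonzero integer vector k lies in C.  Its minimal annihilating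
   polynomial q for F^T has rational coefficients, and q(F^T) is injective on
   S and on U: a vector there killed by q would share its minimal annihilator
   with a nonzero vector of C, so a fixed matrix would carry one F-orbit onto
   the other, which the domination of S by C and of C by U forbids.  As
   q(F^T) is singular, it has an integer kernel vector m, which therefore
   annihilates S and U.  Then phi(x) = cos(2 pi <x, m>) is smooth, periodic and
   constant along strong stable and unstable leaves, so all its periodic cycle
   functionals vanish; yet it is not a coboundary up to a constant K: K must be
   phi(0) = 1, while phi = -1 at a rational, hence F-periodic, point. *)

From Pilot Require Import Defs.
From HB Require Import structures.
From mathcomp Require Import all_boot all_order all_algebra.
From mathcomp Require Import all_classical all_reals all_analysis.
From mathcomp Require Import lra zify.
Set Implicit Arguments. Unset Strict Implicit. Unset Printing Implicit Defensive.
Import Order.TTheory GRing.Theory Num.Theory.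
Import numFieldNormedType.Exports.
Local Open Scope classical_set_scope.
Local Open Scope ring_scope.

(* [gnorm] alone would also denote a lemma of fingroup. *)
Local Notation gnorm := Defs.gnorm.

Section QuadraticNorm.
Variables (R : realType) (n : nat).
Implicit Types (v : 'rV[R]_n) (G H X : 'M[R]_n).

Definition qform G v : R := (v *m G *m v^T) 0 0.

Lemma gnorm_ge0 G v : 0 <= gnorm G v.
Proof. exact: sqrtr_ge0. Qed.

Lemma gnorm0 G : gnorm G 0 = 0.
Proof. by rewrite /gnorm !mul0mx mxE sqrtr0. Qed.

Lemma gnorm_gt0 G v : posdef G -> v != 0 -> 0 < gnorm G v.
Proof. by move=> [_ pG] /pG; rewrite /gnorm sqrtr_gt0. Qed.

Lemma gnormZ G a v : gnorm G (a *: v) = `|a| * gnorm G v.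
Proof.
rewrite /gnorm -!/(qform G _) -sqrtr_sqr -sqrtrM ?sqr_ge0 //; congr Num.sqrt.
rewrite /qform -!scalemxAl linearZ /= -scalemxAr.
by rewrite !mxE mulrA expr2.
Qed.

Lemma gnorm_mulmx G X v : gnorm G (v *m X) = gnorm (X *m G *m X^T) v.
Proof. by rewrite /gnorm trmx_mul !mulmxA. Qed.

Lemma continuous_sum (I : Type) (r : seq I) (f : I -> 'rV[R]_n -> R) :
  (forall i, continuous (f i)) -> continuous (fun v => \sum_(i <- r) f i v).
Proof.
move=> cf; elim: r => [|i r IH].
  by under eq_fun do rewrite big_nil; exact: cst_continuous.
under eq_fun do rewrite big_cons.
by move=> x; apply: continuousD; [exact: cf | exact: IH].
Qed.

Lemma continuous_mulmx_coord p (X : 'M[R]_(n, p)) j :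
  continuous (fun v : 'rV[R]_n => (v *m X) 0 j).
Proof.
under eq_fun do rewrite mxE.
apply: continuous_sum => i x.
by apply: continuousM; [exact: coord_continuous | exact: cst_continuous].
Qed.

Lemma qform_continuous G : continuous (qform G).
Proof.
have -> : qform G = fun v => \sum_j (v *m G) 0 j * v 0 j.
  by apply: funext => w; rewrite /qform mxE; apply: eq_bigr => j _; rewrite [w^T _ _]mxE.
apply: continuous_sum => j w; apply: continuousM.
  exact: continuous_mulmx_coord.
exact: coord_continuous.
Qed.

Lemma gnorm_continuous G : continuous (gnorm G).
Proof.
move=> v; apply: (continuous_comp (f := qform G)); last exact: sqrt_continuous.
exact: qform_continuous.
Qed.

(* Compare the extrema of both norms on the compact sphere [`|v| = 1]. *)
Lemma gnorm_le_mul_gnorm G H : posdef G ->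
  exists K, 0 <= K /\ forall v, gnorm H v <= K * gnorm G v.
Proof.
move=> pG; pose A := [set v : 'rV[R]_n | `|v| = 1].
have [[v0 Av0]|A0] := pselect (A !=set0); last first.
  exists 0; split=> // v; have -> : v = 0; last by rewrite gnorm0 mul0r.
  apply/eqP/negPn/negP => v0; apply: A0; exists (`|v|^-1 *: v).
  by rewrite /A /= normrZ normfV normr_id mulVf ?normr_eq0.
have cA : compact A.
  apply: bounded_closed_compact.
    by exists 1; split=> // M M1 v /= ->; exact: ltW.
  apply: (@preimage_closed _ _ (fun v : 'rV[R]_n => `|v|) [set 1]).
    by move=> x _; exact: norm_continuous.
  exact: closed_eq.
have [c Ac cmin] := EVT_min_rV (f := gnorm G) (ex_intro _ v0 Av0) cA
  (continuous_subspaceT (@gnorm_continuous G)).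
have [c' _ cmax] := EVT_max_rV (f := gnorm H) (ex_intro _ v0 Av0) cA
  (continuous_subspaceT (@gnorm_continuous H)).
have c0 : c != 0.
  move: Ac; rewrite inE /A /= => c1; apply: contraPneq c1 => ->.
  by rewrite normr0 => /esym/eqP; rewrite oner_eq0.
have e0 := gnorm_gt0 pG c0.
exists (gnorm H c' / gnorm G c); split; first by rewrite divr_ge0 ?gnorm_ge0.
have hA w : w \in A -> gnorm H w <= gnorm H c' / gnorm G c * gnorm G w.
  move=> Aw; apply: le_trans (cmax _ Aw) _.
  by rewrite mulrAC ler_pdivlMr // ler_wpM2l ?gnorm_ge0 ?cmin.
move=> v; have [->|v0'] := eqVneq v 0; first by rewrite !gnorm0 mulr0.
have nv : 0 < `|v| by rewrite normr_gt0.
have Aw : (`|v|^-1 *: v) \in A.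
  by rewrite inE /A /= normrZ normfV normr_id mulVf ?gt_eqF.
have := hA _ Aw; rewrite !gnormZ normfV normr_id mulrCA.
by rewrite ler_pM2l ?invr_gt0.
Qed.

Lemma gnorm_mulmx_le G X : posdef G ->
  exists K, 0 <= K /\ forall v, gnorm G (v *m X) <= K * gnorm G v.
Proof.
move=> /(gnorm_le_mul_gnorm (X *m G *m X^T)) [K [K0 hK]].
by exists K; split=> // v; rewrite gnorm_mulmx.
Qed.

End QuadraticNorm.

Lemma geometric_domination (R : realType) (a b c M : R) :
  0 <= a -> a < b -> 0 < c -> ~ (forall k, c * b ^+ k <= M * a ^+ k).
Proof.
move=> a0 ab c0 h; have b0 : 0 < b := le_lt_trans a0 ab.
have r1 : `|a / b| < 1.
  by rewrite ger0_norm ?ltr_pdivrMr ?mul1r // divr_ge0 // ltW.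
have lim0 : (fun k => M * (a / b) ^+ k) @ \oo --> 0.
  by rewrite -(mulr0 M); apply: cvgM; [exact: cvg_cst | exact: cvg_expr].
suff : c <= 0 by rewrite leNgt c0.
apply: (closed_cvg (fun x => c <= x) _ _ _ lim0); first exact: closed_ge.
near=> k; rewrite expr_div_n mulrA ler_pdivlMr ?exprn_gt0 //; exact: h.
Unshelve. all: by end_near.
Qed.

Lemma submx_stable_exp (K : fieldType) m n (E : 'M[K]_(m, n)) (A : 'M[K]_n)
    (x : 'rV[K]_n) k :
  stablemx E A -> (x <= E)%MS -> (x *m A ^+ k <= E)%MS.
Proof.
move=> EA xE; elim: k => [|k IH]; first by rewrite expr0 mulmx1.
by rewrite exprSr mulmxA; apply: submx_trans (submxMr _ IH) EA.
Qed.

Section Domination.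
Variables (R : realType) (n : nat) (G : 'M[R]_n).
Hypothesis pG : posdef G.
Implicit Types (v x y : 'rV[R]_n) (A E X : 'M[R]_n).

Lemma unit_sphere_normalize E v :
  (v <= E)%MS -> v != 0 -> unit_sphere G E ((gnorm G v)^-1 *: v).
Proof.
move=> vE v0; split; first exact: scalemx_sub.
by rewrite gnormZ normfV gtr0_norm ?gnorm_gt0 // mulVf // gt_eqF ?gnorm_gt0.
Qed.

Lemma gnorm_le_restr_norm (F : 'M[int]_n) E v : (v <= E)%MS ->
  gnorm G (v *m (Fr R F)^T) <= restr_norm G F E * gnorm G v.
Proof.
move=> vE; have [->|v0] := eqVneq v 0; first by rewrite mul0mx gnorm0 mulr0.
have gv := gnorm_gt0 pG v0.
have [K [_ hK]] := gnorm_mulmx_le (Fr R F)^T pG.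
have ub : has_ubound [set gnorm G (w *m (Fr R F)^T) | w in unit_sphere G E].
  by exists K => _ [w [_ w1] <-]; rewrite -[K]mulr1 -w1 hK.
have := ub_le_sup ub (ex_intro2 _ _ _ (unit_sphere_normalize vE v0) erefl).
by rewrite -scalemxAl gnormZ normfV gtr0_norm // ler_pdivrMl // mulrC.
Qed.

Lemma restr_conorm_le_gnorm (F : 'M[int]_n) E v : (v <= E)%MS ->
  restr_conorm G F E * gnorm G v <= gnorm G (v *m (Fr R F)^T).
Proof.
move=> vE; have [->|v0] := eqVneq v 0; first by rewrite mul0mx gnorm0 mulr0.
have gv := gnorm_gt0 pG v0.
have lb : has_lbound [set gnorm G (w *m (Fr R F)^T) | w in unit_sphere G E].
  by exists 0 => _ [w _ <-]; exact: gnorm_ge0.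
have := ge_inf lb (ex_intro2 _ _ _ (unit_sphere_normalize vE v0) erefl).
by rewrite -scalemxAl gnormZ normfV gtr0_norm // ler_pdivlMl // mulrC.
Qed.

Definition dominated A E1 E2 : Prop :=
  exists a b : R, [/\ a < b,
    forall v, (v <= E1)%MS -> gnorm G (v *m A) <= a * gnorm G v &
    forall v, (v <= E2)%MS -> b * gnorm G v <= gnorm G (v *m A)].

Lemma restr_norm_dominated (F : 'M[int]_n) E1 E2 :
  restr_norm G F E1 < restr_conorm G F E2 -> dominated (Fr R F)^T E1 E2.
Proof.
move=> h; exists (restr_norm G F E1), (restr_conorm G F E2); split=> // v.
  exact: gnorm_le_restr_norm.
exact: restr_conorm_le_gnorm.
Qed.

Lemma gnorm_exp_le A E a x : stablemx E A -> 0 <= a ->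
    (forall v, (v <= E)%MS -> gnorm G (v *m A) <= a * gnorm G v) ->
  (x <= E)%MS -> forall k, gnorm G (x *m A ^+ k) <= a ^+ k * gnorm G x.
Proof.
move=> EA a0 hE xE; elim=> [|k IH]; first by rewrite expr0 mulmx1 mul1r.
rewrite [A ^+ _.+1]exprSr mulmxA exprS -mulrA.
exact: le_trans (hE _ (submx_stable_exp _ EA xE)) (ler_wpM2l a0 IH).
Qed.

Lemma gnorm_exp_ge A E b y : stablemx E A -> 0 <= b ->
    (forall v, (v <= E)%MS -> b * gnorm G v <= gnorm G (v *m A)) ->
  (y <= E)%MS -> forall k, b ^+ k * gnorm G y <= gnorm G (y *m A ^+ k).
Proof.
move=> EA b0 hE yE; elim=> [|k IH]; first by rewrite expr0 mulmx1 mul1r.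
rewrite [A ^+ _.+1]exprSr mulmxA exprS -mulrA.
exact: le_trans (ler_wpM2l b0 IH) (hE _ (submx_stable_exp _ EA yE)).
Qed.

(* The orbit of [y] grows exponentially faster than that of [x], so no fixed
   matrix maps the one onto the other. *)
Lemma dominated_no_intertwiner A E1 E2 x y X :
  dominated A E1 E2 -> stablemx E1 A -> stablemx E2 A ->
  (x <= E1)%MS -> (y <= E2)%MS -> y != 0 ->
  ~ (forall k, y *m A ^+ k = x *m A ^+ k *m X).
Proof.
move=> [a [b [ab h1 h2]]] E1A E2A xE1 yE2 y0 hX.
have x0 : x != 0.
  by apply: contraNneq y0 => x0; have := hX 0%N; rewrite !expr0 !mulmx1 x0 mul0mx => ->.
have a0 : 0 <= a.
  have := le_trans (gnorm_ge0 _ _) (h1 _ xE1).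
  by rewrite pmulr_lge0 ?gnorm_gt0.
have [K [K0 hK]] := gnorm_mulmx_le X pG.
apply: (geometric_domination a0 ab (gnorm_gt0 pG y0) (M := K * gnorm G x)) => k.
rewrite mulrC; apply: le_trans (gnorm_exp_ge E2A (le_trans a0 (ltW ab)) h2 yE2 k) _.
rewrite hX mulrAC -mulrA; apply: le_trans (hK _) _.
by rewrite ler_wpM2l // (gnorm_exp_le E1A a0 h1 xE1).
Qed.

End Domination.

Section MinAnnihilator.
Variables (K : fieldType) (n : nat).
Implicit Types (A : 'M[K]_n.+1) (x y : 'rV[K]_n.+1) (p q f g : {poly K}).

Definition krylov A x m : 'M[K]_(m, n.+1) := \matrix_(j < m) (x *m A ^+ j).

Definition min_annihilator A x p : Prop :=
  [/\ p != 0, x *m horner_mx A p = 0 &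
      forall g, g != 0 -> x *m horner_mx A g = 0 -> (size p <= size g)%N].

Lemma horner_mx_mulmxA A x p q :
  x *m horner_mx A (p * q) = x *m horner_mx A p *m horner_mx A q.
Proof. by rewrite rmorphM /= mulmxA. Qed.

Lemma annihilator_mull A x p g :
  x *m horner_mx A p = 0 -> x *m horner_mx A (g * p) = 0.
Proof. by move=> xp; rewrite mulrC horner_mx_mulmxA xp mul0mx. Qed.

Lemma horner_mx_krylov A x p m : (size p <= m)%N ->
  x *m horner_mx A p = \row_(i < m) p`_i *m krylov A x m.
Proof.
move=> sp; have pE : p = \sum_(i < m) p`_i *: 'X^i.
  rewrite -poly_def; apply/polyP => k; rewrite coef_poly.
  by case: ltnP => // km; rewrite nth_default // (leq_trans sp km).
rewrite [RHS]mulmx_sum_row {1}pE linear_sum mulmx_sumr; apply: eq_bigr => i _.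
by rewrite linearZ /= -scalemxAr rmorphXn /= horner_mx_X rowK mxE.
Qed.

Lemma row_free_krylov_eq0 A x m f : row_free (krylov A x m) ->
  (size f <= m)%N -> x *m horner_mx A f = 0 -> f = 0.
Proof.
rewrite -kermx_eq0 => /eqP ker0 sf; rewrite (horner_mx_krylov _ _ sf) => xf.
have /eqP f0 : \row_(i < m) f`_i == 0.
  by rewrite -submx0 -ker0; apply/sub_kermxP.
apply/polyP => k; rewrite coef0; case: (ltnP k m) => km.
  by have := congr1 (fun r : 'rV_m => r 0 (Ordinal km)) f0; rewrite !mxE.
by rewrite nth_default // (leq_trans sf km).
Qed.

Lemma row_free_krylov A x m :
  (forall f, (size f <= m)%N -> x *m horner_mx A f = 0 -> f = 0) ->
  row_free (krylov A x m).
Proof.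
move=> hm; rewrite -kermx_eq0; apply/eqP/row_matrixP => i; rewrite row0.
set u := row i _; have uK : u *m krylov A x m = 0 by apply/sub_kermxP/row_sub.
pose f := \poly_(j < m) (if insub j is Some j' then u 0 j' else 0).
have uf : u = \row_(j < m) f`_j.
  by apply/rowP => j; rewrite [RHS]mxE /f coef_poly ltn_ord valK.
have sf : (size f <= m)%N by exact: size_poly.
have f0 : f = 0 by apply: hm; rewrite // (horner_mx_krylov _ _ sf) -uf.
by rewrite uf f0; apply/rowP => j; rewrite !mxE coef0.
Qed.

Lemma min_annihilatorP A x p : min_annihilator A x p <->
  [/\ p != 0, x *m horner_mx A p = 0 & row_free (krylov A x (size p).-1)].
Proof.
have small g : p != 0 -> (size g <= (size p).-1)%N = (size g < size p)%N.
  by move=> p0; rewrite -ltnS prednK // size_poly_gt0.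
split=> [[p0 xp pmin]|[p0 xp /row_free_krylov_eq0 hfree]]; split=> //.
  apply: row_free_krylov => f sf xf; apply: contraTeq sf => f0.
  by rewrite small // -leqNgt pmin.
by move=> g g0 xg; rewrite leqNgt -small //; apply: contra g0 => /hfree ->.
Qed.

Lemma ex_min_annihilator A x f : f != 0 -> x *m horner_mx A f = 0 ->
  exists p, min_annihilator A x p.
Proof.
move=> f0 xf.
pose P m := `[< exists g, [/\ g != 0, x *m horner_mx A g = 0 & size g = m] >].
have [|m /asboolP [p [p0 xp <-]] pmin] := @ex_minnP P.
  by exists (size f); apply/asboolP; exists f.
by exists p; split=> // g g0 xg; apply: pmin; apply/asboolP; exists g.
Qed.

Lemma min_annihilator_size A x p : min_annihilator A x p ->
  (1 < size p)%N = (x != 0).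
Proof.
move=> [p0 xp pmin]; apply/idP/idP => [sp|x0].
  apply: contraTneq sp => x0; rewrite -leqNgt.
  by have := pmin 1 (oner_neq0 _); rewrite size_poly1 x0 mul0mx; apply.
apply: contraNT x0; rewrite -leqNgt => /size1_polyC pc.
move: p0 xp; rewrite pc horner_mx_C mul_mx_scalar polyC_eq0 => c0 /eqP.
by rewrite scaler_eq0 (negPf c0).
Qed.

Lemma min_annihilator_dvdp A x p q : min_annihilator A x p ->
  x *m horner_mx A q = 0 -> p %| q.
Proof.
move=> [p0 xp pmin] xq; rewrite /dvdp; apply: contraT => r0.
have : x *m horner_mx A (q %% p) = 0.
  by move: xq; rewrite {1}(divp_eq q p) rmorphD /= mulmxDr annihilator_mull // add0r.
by move=> /(pmin _ r0); rewrite leqNgt ltn_modp p0.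
Qed.

Lemma stablemx_horner_mx m (E : 'M[K]_(m, n.+1)) A p :
  stablemx E A -> stablemx E (horner_mx A p).
Proof.
move=> EA; elim/poly_ind: p => [|p c IH]; first by rewrite rmorph0 mulmx0 sub0mx.
rewrite rmorphD rmorphM /= horner_mx_X horner_mx_C mulmxDr mul_mx_scalar.
by rewrite addmx_sub ?scalemx_sub // mulmxA (submx_trans (submxMr _ IH)).
Qed.

Lemma min_annihilator_divp A k p q : min_annihilator A k q -> p != 0 ->
  p %| q -> min_annihilator A (k *m horner_mx A (q %/ p)) p.
Proof.
move=> [q0 kq qmin] p0 pq; have qE := divpK pq.
have g0 : q %/ p != 0 by apply: contraNneq q0 => g0; rewrite -qE g0 mul0r.
split=> //; first by rewrite -horner_mx_mulmxA qE.
move=> h h0; rewrite -horner_mx_mulmxA => /(qmin _ (mulf_neq0 g0 h0)).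
rewrite -{1}qE (size_mul g0 p0) (size_mul g0 h0).
move: g0; rewrite -size_poly_gt0; case: (size (q %/ p)) => // a _.
by rewrite !addSn leq_add2l.
Qed.

Lemma min_annihilator_intertwine A x y p : min_annihilator A x p ->
  y *m horner_mx A p = 0 ->
  exists X : 'M[K]_n.+1, forall k, y *m A ^+ k = x *m A ^+ k *m X.
Proof.
move=> /min_annihilatorP [p0 xp /row_freeP [B hB]] yp.
exists (B *m krylov A y (size p).-1) => k.
have sr : (size ('X^k %% p)%R <= (size p).-1)%N.
  by rewrite -ltnS prednK ?ltn_modp // size_poly_gt0.
have red (z : 'rV_n.+1) :
    z *m horner_mx A p = 0 -> z *m A ^+ k = z *m horner_mx A ('X^k %% p).
  have -> : A ^+ k = horner_mx A 'X^k by rewrite rmorphXn /= horner_mx_X.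
  move=> zp; rewrite {1}(divp_eq 'X^k p) rmorphD /= mulmxDr.
  by rewrite annihilator_mull ?add0r.
rewrite (red _ xp) (red _ yp) !(horner_mx_krylov _ _ sr) -!mulmxA.
by rewrite (mulmxA (krylov _ _ _)) hB mul1mx.
Qed.

End MinAnnihilator.

Section MapMinAnnihilator.
Variables (aF rF : fieldType) (f : {rmorphism aF -> rF}) (n : nat).

Lemma map_krylov (A : 'M[aF]_n.+1) x m :
  map_mx f (krylov A x m) = krylov (map_mx f A) (map_mx f x) m.
Proof.
by apply/row_matrixP => i; rewrite -map_row !rowK map_mxM rmorphXn.
Qed.

Lemma map_min_annihilator (A : 'M[aF]_n.+1) x p : min_annihilator A x p ->
  min_annihilator (map_mx f A) (map_mx f x) (map_poly f p).
Proof.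
move=> /min_annihilatorP [p0 xp xfree]; apply/min_annihilatorP; split.
- by rewrite map_poly_eq0.
- by rewrite -map_horner_mx -map_mxM xp map_mx0.
- by rewrite size_map_poly /row_free -map_krylov mxrank_map.
Qed.

End MapMinAnnihilator.

Lemma map_intmx_eq0 (R : numDomainType) m n (M : 'M[int]_(m, n)) :
  (map_mx (intr : int -> R) M == 0) = (M == 0).
Proof.
apply/eqP/eqP => [M0|->]; last by rewrite map_mx0.
apply/matrixP => i j; have /matrixP/(_ i j) := M0.
by rewrite !mxE => /eqP; rewrite intr_eq0 => /eqP.
Qed.

Lemma rat_row_int_multiple n (v : 'rV[rat]_n) :
  exists2 D : int, D != 0 & exists w : 'rV[int]_n, map_mx intr w = D%:~R *: v.
Proof.
pose D : int := \prod_i denq (v 0 i); exists D.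
  by rewrite prodf_seq_neq0; apply/allP => i _; exact: denq_neq0.
exists (\row_i (numq (v 0 i) * \prod_(j | j != i) denq (v 0 j))).
apply/rowP => i; rewrite !mxE /D [in RHS](bigD1 i) //= !intrM numqE.
by rewrite [RHS]mulrC mulrA.
Qed.

Lemma int_min_annihilator_kernel (R : numFieldType) n (Ai : 'M[int]_n.+1)
    (k : 'rV[int]_n.+1) : k != 0 ->
  exists2 q : {poly R}, min_annihilator (map_mx intr Ai) (map_mx intr k) q &
    exists2 m : 'cV[int]_n.+1, m != 0 &
      horner_mx (map_mx intr Ai) q *m map_mx intr m = 0.
Proof.
move=> k0; pose Aq : 'M[rat]_n.+1 := map_mx intr Ai.
pose kq : 'rV[rat]_n.+1 := map_mx intr k.
have kq0 : kq != 0 by rewrite map_intmx_eq0.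
have kchar : kq *m horner_mx Aq (char_poly Aq) = 0 by rewrite Cayley_Hamilton mulmx0.
have [q qmin] := ex_min_annihilator (monic_neq0 (char_poly_monic Aq)) kchar.
have ratrE m' n' (M : 'M[int]_(m', n')) :
    map_mx ratr (map_mx intr M) = map_mx intr M :> 'M[R]_(m', n').
  by apply/matrixP => i j; rewrite !mxE ratr_int.
exists (map_poly ratr q); first by rewrite -!ratrE; exact: map_min_annihilator.
have /det0P [v v0 vQ] : \det (horner_mx Aq q)^T == 0.
  by rewrite det_tr; apply/det0P; exists kq; last by case: qmin.
have [D D0 [w wE]] := rat_row_int_multiple v.
exists w^T.
  by rewrite -(map_intmx_eq0 rat) -map_trmx trmx_eq0 wE scaler_eq0 intr_eq0 negb_or D0.
rewrite -ratrE -[X in _ *m X]ratrE -map_horner_mx -map_mxM -map_trmx wE.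
rewrite linearZ /= -scalemxAr -[horner_mx _ _]trmxK -trmx_mul vQ.
by rewrite trmx0 scaler0 map_mx0.
Qed.

Lemma submx_mul_stablemx (K : fieldType) m n (E : 'M[K]_(m, n)) (A : 'M[K]_n) :
  stablemx E A -> \rank (E *m A) = \rank E -> (E <= E *m A)%MS.
Proof. by move=> EA rkEA; case: (mxrank_leqif_sup EA) => _ <-; rewrite rkEA. Qed.

Lemma stablemx_inj_mulmx_eq0 (K : fieldType) m n (E : 'M[K]_(m, n))
    (Q : 'M[K]_n) (c : 'cV[K]_n) :
  stablemx E Q -> (forall w : 'rV_n, (w <= E)%MS -> w *m Q = 0 -> w = 0) ->
  Q *m c = 0 -> E *m c = 0.
Proof.
move=> EQ Qinj Qc.
have capE0 : (E :&: kermx Q)%MS = 0.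
  apply/row_matrixP => i; rewrite row0; apply: Qinj.
    exact: submx_trans (row_sub _ _) (capmxSl _ _).
  by apply/sub_kermxP; apply: submx_trans (row_sub _ _) (capmxSr _ _).
have rkEQ : \rank (E *m Q) = \rank E.
  by have := mxrank_mul_ker E Q; rewrite capE0 mxrank0 addn0.
have /submxP [D ->] := submx_mul_stablemx EQ rkEQ.
by rewrite -!mulmxA Qc !mulmx0.
Qed.

Lemma dominated_horner_mx_inj (R : realType) n (G A E E' : 'M[R]_n.+1)
    (k : 'rV[R]_n.+1) q :
  posdef G -> stablemx E A -> stablemx E' A ->
  dominated G A E' E \/ dominated G A E E' ->
  (k <= E)%MS -> min_annihilator A k q ->
  forall w : 'rV_n.+1, (w <= E')%MS -> w *m horner_mx A q = 0 -> w = 0.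
Proof.
move=> pG EA E'A hdom kE kq w wE' wq; have [//|w0] := eqVneq w 0; exfalso.
have [q0 _ _] := kq; have [p wp] := ex_min_annihilator q0 wq.
have pq := min_annihilator_dvdp wp wq; have [p0 wp0 _] := wp.
have cp := min_annihilator_divp kq p0 pq.
set c := k *m _ in cp.
have cE : (c <= E)%MS := submx_trans (submxMr _ kE) (stablemx_horner_mx _ EA).
have c0 : c != 0 by rewrite -(min_annihilator_size cp) (min_annihilator_size wp).
case: hdom => hdom.
  have [_ cp0 _] := cp; have [X hX] := min_annihilator_intertwine wp cp0.
  exact: (dominated_no_intertwiner pG hdom E'A EA wE' cE c0 hX).
have [X hX] := min_annihilator_intertwine cp wp0.
exact: (dominated_no_intertwiner pG hdom EA E'A cE wE' w0 hX).
Qed.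

Lemma center_int_annihilator (R : realType) n (F : 'M[int]_n.+1)
    (S C U G : 'M[R]_n.+1) (k : 'rV[int]_n.+1) :
  posdef G ->
  stablemx S (Fr R F)^T -> stablemx C (Fr R F)^T ->
  stablemx U (Fr R F)^T ->
  restr_norm G F S < restr_conorm G F C -> restr_norm G F C < restr_conorm G F U ->
  k != 0 -> (map_mx intr k <= C)%MS ->
  exists2 m : 'cV[int]_n.+1, m != 0 &
    S *m map_mx intr m = 0 /\ U *m map_mx intr m = 0.
Proof.
move=> pG SA CA UA hSC hCU k0 kC.
have AE : (Fr R F)^T = map_mx intr F^T by rewrite /Fr map_trmx.
rewrite AE in SA CA UA.
have [q qmin [m m0 Qm]] := int_min_annihilator_kernel R F^T k0.
have hSC' := restr_norm_dominated pG hSC; have hCU' := restr_norm_dominated pG hCU.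
rewrite AE in hSC' hCU'.
exists m => //; split; apply: stablemx_inj_mulmx_eq0 Qm.
- exact: stablemx_horner_mx.
- exact: dominated_horner_mx_inj pG CA SA (or_introl hSC') kC qmin.
- exact: stablemx_horner_mx.
- exact: dominated_horner_mx_inj pG CA UA (or_intror hCU') kC qmin.
Qed.

Lemma is_derive_line (R : realType) (V : normedModType R) (f : V -> R)
    (g : R -> R) (x v : V) (df : R) :
  (forall h, f (h *: v + x) = g h) -> is_derive (0 : R) 1 g df ->
  is_derive x v f df.
Proof.
move=> fg [dg <-].
have E : (fun h : R => h^-1 *: ((f \o shift x) (h *: v) - f x)) =
         (fun h : R => h^-1 *: ((g \o shift 0) (h *: 1) - g 0)).
  apply: funext => h /=; rewrite -[in f x](add0r x) -(scale0r v) !fg addr0.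
  by congr (_ *: (g _ - _)); rewrite /GRing.scale /= mulr1.
by split; rewrite /derivable /derive E.
Qed.

Section Wave.
Variables (R : realType) (d : nat) (m : 'cV[R]_d).
Implicit Types (x v : 'rV[R]_d) (c th : R).

Definition wave c th x : R := c * cos (2 * pi * (x *m m) 0 0 + th).

Lemma is_derive_wave c th x v :
  is_derive x v (wave c th) (wave (c * (2 * pi * (v *m m) 0 0)) (th + pi / 2) x).
Proof.
set a := 2 * pi * (x *m m) 0 0 + th; set b := 2 * pi * (v *m m) 0 0.
have lineE h : wave c th (h *: v + x) = c * cos (h * b + a).
  rewrite /wave /a /b.
  have -> : ((h *: v + x) *m m) 0 0 = h * (v *m m) 0 0 + (x *m m) 0 0.
    by rewrite mulmxDl -scalemxAl !mxE.
  by rewrite mulrDr addrA mulrCA.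
have daff : is_derive (0 : R) 1 (fun h : R => h * b + a) b.
  by apply: is_derive_eq; rewrite scale0r add0r addr0 /GRing.scale /= mulr1.
have dcos : is_derive (0 * b + a) 1 cos (- sin a).
  by rewrite mul0r add0r; exact: is_derive_cos.
have -> : wave (c * b) (th + pi / 2) x = c *: (- sin a * b).
  by rewrite /wave addrA cosDpihalf /GRing.scale /= -mulrA [b * _]mulrC.
have := is_deriveZ c (is_derive1_comp (g := fun h => h * b + a) dcos daff).
by apply: is_derive_line => h; rewrite lineE.
Qed.

Lemma dderiv_wave vs : exists c th, dderiv vs (wave 1 0) = wave c th.
Proof.
elim: vs => [|v vs [c [th IH]]]; first by exists 1, 0.
exists (c * (2 * pi * (v *m m) 0 0)), (th + pi / 2); apply: funext => x /=.
by rewrite IH; have D := is_derive_wave c th x v; exact: derive_val.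
Qed.

Lemma continuous_wave c th : continuous (wave c th).
Proof.
have cphase : continuous (fun y : 'rV[R]_d => 2 * pi * (y *m m) 0 0 + th).
  move=> y; apply: (@continuousD _ _ _ (fun y : 'rV[R]_d => 2 * pi * (y *m m) 0 0)
    (fun=> th)); last exact: cst_continuous.
  apply: (@continuousM _ _ (fun=> 2 * pi) (fun y : 'rV[R]_d => (y *m m) 0 0)).
    exact: cst_continuous.
  exact: continuous_mulmx_coord.
move=> x; apply: continuousM; first exact: cst_continuous.
by apply: continuous_comp; [exact: cphase | exact: continuous_cos].
Qed.

Lemma smooth_wave : smooth (wave 1 0).
Proof.
move=> vs; have [c [th ->]] := dderiv_wave vs; split; first exact: continuous_wave.
by move=> x v; have D := is_derive_wave c th x v; exact: ex_derive.
Qed.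

End Wave.

Lemma periodicz (U V : zmodType) (f : U -> V) (T : U) :
  periodic f T -> forall (z : int) a, f (a + T *~ z) = f a.
Proof.
move=> fT [] n a; first exact: periodicn.
by rewrite NegzE mulrNz -[in RHS](subrK (T *+ n.+1) a) periodicn.
Qed.

Lemma stablemx_invmx (K : fieldType) m n (E : 'M[K]_(m, n)) (A : 'M[K]_n) :
  stablemx E A -> A \in unitmx -> stablemx E (invmx A).
Proof.
move=> EA uA; have rkEA : \rank (E *m A) = \rank E.
  by rewrite mxrankMfree // row_free_unit.
by have := submxMr (invmx A) (submx_mul_stablemx EA rkEA); rewrite mulmxK.
Qed.

Section IntegerPoints.
Variables (R : realType) (d : nat).
Implicit Types (F : 'M[int]_d) (x k : 'rV[R]_d).

Lemma intvec_mulmx k (B : 'M[int]_d) : intvec k -> intvec (k *m map_mx intr B).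
Proof. by move=> [ki ->]; exists (ki *m B); rewrite map_mxM. Qed.

Lemma Fpow_trmx_exp F n x : Fpow F n x = x *m map_mx intr (F^T ^+ n).
Proof. by rewrite /Fpow /Fr map_trmx rmorphXn. Qed.

Lemma intvec_Fpow F n k : intvec k -> intvec (Fpow F n k).
Proof. by rewrite Fpow_trmx_exp; exact: intvec_mulmx. Qed.

Lemma FpowD F n x y : Fpow F n (x + y) = Fpow F n x + Fpow F n y.
Proof. exact: mulmxDl. Qed.

Lemma Fr_unitmx F : \det F = 1 -> Fr R F \in unitmx.
Proof. by move=> dF; rewrite unitmxE /Fr det_map_mx dF rmorph1 unitr1. Qed.

Lemma invmx_Fr F : \det F = 1 -> invmx (Fr R F) = Fr R (\adj F).
Proof.
move=> dF; rewrite /invmx Fr_unitmx // /Fr det_map_mx dF rmorph1 invr1 scale1r.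
by rewrite map_mx_adj.
Qed.

Lemma Finvpow_adj F n x : \det F = 1 -> Finvpow F n x = Fpow (\adj F) n x.
Proof. by move=> dF; rewrite /Finvpow /Fpow invmx_Fr. Qed.

Lemma Fpow_iter F n x : Fpow F n x = iter n (Fpow F 1) x.
Proof.
elim: n => [|n IH]; first by rewrite /Fpow expr0 mulmx1.
by rewrite iterS -IH /Fpow expr1 -mulmxA mulmxE -exprSr.
Qed.

End IntegerPoints.

Section IntegerWave.
Variables (R : realType) (d : nat) (mi : 'cV[int]_d).
Local Notation m := (map_mx intr mi : 'cV[R]_d).
Local Notation phi := (wave m 1 0).

Lemma wave_shift c th x v k : v *m m = 0 -> intvec k ->
  wave m c th (x + v + k) = wave m c th x.
Proof.
move=> vm [ki ->]; rewrite /wave.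
have -> : ((x + v + map_mx intr ki) *m m) 0 0 = (x *m m) 0 0 + ((ki *m mi) 0 0)%:~R.
  by rewrite !mulmxDl vm addr0 -map_mxM !mxE.
rewrite mulrDr -addrA [_ + th]addrC addrA mulr_natl mulrzr.
by rewrite (periodicz (@cosD2pi R)).
Qed.

Lemma wave_Zperiodic c th : Zperiodic (wave m c th).
Proof. by move=> x k ik; have := wave_shift c th x (mul0mx 1 m) ik; rewrite addr0. Qed.

Lemma limn_series_wave_leaf (F : 'M[int]_d) (E : 'M[R]_d) x v k (f : nat -> nat) :
  stablemx E (Fr R F)^T -> E *m m = 0 -> (v <= E)%MS -> intvec k ->
  limn (series (fun n => phi (Fpow F (f n) x) - phi (Fpow F (f n) (x + v + k)))) = 0.
Proof.
move=> EA Em vE ik; set u := fun n => _.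
suff -> : series u = fun=> 0 by exact: lim_cst.
apply: funext => n; rewrite /series /= big1 // => j _; rewrite /u.
rewrite !FpowD wave_shift ?subrr //; last exact: intvec_Fpow.
rewrite /Fpow; have /submxP [D ->] := submx_stable_exp (f j) EA vE.
by rewrite -mulmxA Em mulmx0.
Qed.

Lemma PCF_wave_eq0 (F : 'M[int]_d) (S U : 'M[R]_d) : \det F = 1 ->
  stablemx S (Fr R F)^T -> stablemx U (Fr R F)^T ->
  S *m m = 0 -> U *m m = 0 ->
  forall (x0 : 'rV[R]_d) legs, su_path S U x0 legs -> PCF F phi x0 legs = 0.
Proof.
move=> dF SA UA Sm Um; have UAi : stablemx U (Fr R (\adj F))^T.
  by rewrite -invmx_Fr // trmx_inv stablemx_invmx // unitmx_tr Fr_unitmx.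
move=> x0 legs; elim: legs x0 => [//|[[] y] legs IH] x0 /= [[v [k [vE [ik ->]]]] hlegs].
  by rewrite IH // addr0; exact: (limn_series_wave_leaf _ id SA Sm vE ik).
rewrite IH // addr0.
rewrite /HolU; under eq_fun do rewrite !Finvpow_adj //.
by rewrite (limn_series_wave_leaf _ succn UAi Um vE ik) oppr0.
Qed.

End IntegerWave.

Lemma mulmx_exp_invmx (K : comUnitRingType) n (A : 'M[K]_n) k :
  A \in unitmx -> A ^+ k *m invmx A ^+ k = 1%:M.
Proof.
move=> uA; elim: k => [|k IH]; first by rewrite !expr0 mulmx1.
by rewrite exprSr exprS -!mulmxE mulmxA -(mulmxA _ A) mulmxV // mulmx1 IH.
Qed.

Lemma nat_collision (T : finType) (f : nat -> T) :
  exists a b, (a < b)%N /\ f a = f b.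
Proof.
have : ~~ injectiveb (fun i : 'I_#|T|.+1 => f i).
  by apply/injectiveP => /leq_card; rewrite card_ord ltnn.
case/injectivePn => i [j ij fij]; case: (ltngtP i j) => [lt|gt|eq].
- by exists i, j.
- by exists j, i.
- by move: ij; rewrite (val_inj eq) eqxx.
Qed.

(* Pigeonhole on the finitely many residues mod [N], then undo the first
   iterates using the integral inverse of [Ai]. *)
Lemma int_row_periodic_mod d (Ai : 'M[int]_d) (w : 'rV[int]_d) (N : int) :
  N != 0 -> Ai \in unitmx ->
  exists2 t, (0 < t)%N & exists z : 'rV[int]_d, w *m Ai ^+ t - w = N *: z.
Proof.
move=> N0 uA; pose W t := w *m Ai ^+ t; pose e t j := W t 0 j.
pose res t : {ffun 'I_d -> 'I_(absz N).+1} :=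
  [ffun j => inord (absz (e t j %% N)%Z)].
have [a [b [ab eab]]] := nat_collision res.
have modE (x : int) : (absz (x %% N)%Z < (absz N).+1)%N.
  by rewrite ltnS; have := ltz_mod x N0; have := modz_ge0 x N0; lia.
have dvdN j : (N %| e b j - e a j)%Z.
  have /ffunP/(_ j) := eab; rewrite !ffunE => /(congr1 val); rewrite /= !inordK //.
  move=> /(congr1 Posz); rewrite !gez0_abs ?modz_ge0 // => ab_mod.
  by rewrite -eqz_mod_dvd ab_mod.
exists (b - a)%N; first by rewrite subn_gt0.
exists (\row_j ((e b j - e a j) %/ N)%Z *m invmx Ai ^+ a).
rewrite scalemxAl (_ : N *: _ = W b - W a); last first.
  by apply/rowP => j; rewrite 2![in LHS]mxE mulrC divzK // /e !mxE.
rewrite mulmxBl /W -!mulmxA mulmx_exp_invmx // mulmx1 -(subnK (ltnW ab)) exprD.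
by rewrite !mulmxA -(mulmxA _ (Ai ^+ a)) mulmx_exp_invmx // mulmx1 addnK.
Qed.

Lemma rational_point_periodic (R : realType) d (F : 'M[int]_d) (N : int)
    (w : 'rV[int]_d) :
  \det F = 1 -> N != 0 ->
  let p : 'rV[R]_d := (N%:~R)^-1 *: map_mx intr w in
  exists2 t, (0 < t)%N & intvec (Fpow F t p - p).
Proof.
move=> dF N0 p; have uF : F^T \in unitmx by rewrite unitmxE det_tr dF unitr1.
have [t t0 [z hz]] := int_row_periodic_mod w N0 uF; exists t => //; exists z.
rewrite Fpow_trmx_exp -scalemxAl -map_mxM -scalerBr -map_mxB hz map_mxZ.
by rewrite scalerA mulVf ?intr_eq0 ?scale1r.
Qed.

Lemma coboundary_sum (T : Type) (V : zmodType) (f : T -> T) (phi u : T -> V) K :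
  (forall x, phi x = u (f x) - u x + K) ->
  forall n x, \sum_(t < n) phi (iter t f x) = u (iter n f x) - u x + K *+ n.
Proof.
move=> cob; elim=> [|n IH] x; first by rewrite big_ord0 subrr mulr0n addr0.
rewrite big_ord_recr /= IH cob mulrSr addrACA (addrC (u _ - u x)).
by rewrite (addrA (u (f _) - _)) subrK.
Qed.

Section WaveNotCoboundary.
Variables (R : realType) (d : nat) (F : 'M[int]_d) (mi : 'cV[int]_d).
Local Notation m := (map_mx intr mi : 'cV[R]_d).
Local Notation phi := (wave m 1 0).

(* Sum the equation over the orbit of the periodic point [e_i / (2 m_i)]. *)
Lemma wave_not_coboundary : \det F = 1 -> mi != 0 ->
  forall u : 'rV[R]_d -> R, Zperiodic u ->
  forall K, ~ (forall x, phi x = u (Fpow F 1 x) - u x + K).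
Proof.
move=> dF mi0 u uper K cob.
have K1 : K = 1.
  by have := cob 0; rewrite /wave /Fpow !mul0mx mxE mulr0 add0r cos0 mul1r subrr add0r.
have [i mii] : exists i, mi i 0 != 0.
  apply/existsP; apply: contraNT mi0 => /existsPn mi_0; apply/eqP/matrixP => a b.
  by rewrite (ord1 b) mxE; apply/eqP/negbNE/mi_0.
set N : int := mi i 0 *+ 2; have N0 : N != 0 by rewrite mulrn_eq0.
set w : 'rV[int]_d := delta_mx 0 i.
set p : 'rV[R]_d := (N%:~R)^-1 *: map_mx intr w.
have phip : phi p = -1.
  have r0 : (mi i 0)%:~R != 0 :> R by rewrite intr_eq0.
  rewrite /wave -scalemxAl -map_mxM -rowE !mxE /N rmorphMn.
  rewrite -(mulr_natr (mi i 0)%:~R) invfM.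
  rewrite [(_^-1 / _) * _]mulrAC mulVf // !mul1r mulrAC mulfV ?pnatr_eq0 //.
  by rewrite mul1r addr0 cospi.
have [t t0 pt] := rational_point_periodic R w dF N0.
have upt : u (Fpow F t p) = u p by rewrite -[Fpow F t p](subrK p) addrC uper.
have := coboundary_sum cob t p; rewrite -Fpow_iter upt subrr add0r K1.
rewrite -(prednK t0) big_ord_recl /= phip.
have : \sum_(s < t.-1) phi (iter s.+1 (Fpow F 1) p) <= t.-1%:R.
  rewrite -[t.-1 in X in _ <= X](card_ord t.-1) -sumr_const; apply: ler_sum => s _.
  by rewrite /wave mul1r cos_le1.
rewrite -natr1; lra.
Qed.
End WaveNotCoboundary.

Theorem theorem3p2 (R : realType) (d : nat) (F : 'M[int]_d)
    (S C U : 'M[R]_d) :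
  \det F = 1 ->
  partially_hyperbolic F S C U ->
  (forall phi : 'rV[R]_d -> R,
     smooth phi -> Zperiodic phi ->
     (forall (x0 : 'rV[R]_d) (legs : seq (bool * 'rV[R]_d)),
        su_cycle S U x0 legs -> PCF F phi x0 legs = 0) ->
     exists u : 'rV[R]_d -> R, Zperiodic u /\
       exists K : R, forall x : 'rV[R]_d,
         phi x = u (Fpow F 1 x) - u x + K) ->
  katznelson_irreducible C.
Proof.
move=> dF [[_ [_ [SA [CA UA]]]] [_ [_ [_ [G [pG [_ [_ [hSC hCU]]]]]]]]] hcob _ [ki ->] kC.
have [->|ki0] := eqVneq ki 0; first by rewrite map_mx0.
exfalso; case: d F S C U G ki dF SA CA UA pG hSC hCU hcob kC ki0
  => [|n] F S C U G ki dF SA CA UA pG hSC hCU hcob kC ki0.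
  by move/eqP: ki0; apply; apply/rowP => -[].
have [mi mi0 [Sm Um]] := center_int_annihilator pG SA CA UA hSC hCU ki0 kC.
have PCF0 x0 legs : su_cycle S U x0 legs -> PCF F (wave (map_mx intr mi) 1 0) x0 legs = 0.
  by move=> [hpath _]; exact: PCF_wave_eq0 dF SA UA Sm Um _ _ hpath.
have [u [uper [K hK]]] := hcob _ (smooth_wave _) (wave_Zperiodic _ _ _) PCF0.
exact: (wave_not_coboundary dF mi0 uper hK).
Qed.
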